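(* For all $s\in\mathcal{Q}$, the function $F_s$ is supported on a subset of $J_s$, and $F_s(c)=1$ for every extremal point $c$ of $J_s$.
   Context: $\mathcal{Q}=\mathbb{Q}^{\geq0}\cup\{\infty\}$; each $\sigma\in\mathcal{Q}$ is written uniquely $\sigma=q/p$ with $p,q\in\mathbb{N}$ coprime ($\infty=1/0$). For such $\sigma$: $J_\sigma=\{(\alpha,\beta)\in\mathbb{Z}^2:\ \alpha\equiv q,\ \beta\equiv p\pmod2;\ \alpha\geq-q;\ \beta\geq-p;\ \alpha+\beta\leq p+q-2;\ p\alpha+q\beta\geq0\}$, $P^\sigma_i=(q+2i,-p)$, $Q^\sigma_j=(-q,p+2j)$. The extremal points of $J_\sigma$ are $P^\sigma_0,P^\sigma_{p-1},Q^\sigma_0,Q^\sigma_{q-1}$ if $\sigma\notin\{0,\infty\}$, and the unique point of $J_\sigma$ if $\sigma\in\{0,\infty\}$. Parents: for $\sigma\in\mathcal{Q}\smallsetminus\{0,1,\infty\}$, let $L_\sigma$ be the hyperbolic geodesic in the upper half-plane from $\sigma$ to $\sqrt{-1}$; the parents of $\sigma$ are the endpoints of the first edge of the Farey triangulation (ideal triangles with vertices $\frac{q_0}{p_0},\frac{q_0+q_1}{p_0+p_1},\frac{q_1}{p_1}$, $q_0p_1-q_1p_0=\pm1$) crossed by $L_\sigma$, closest to $\sigma$; the parents of $1$ are $0$ and $\infty$. For $\sigma\notin\{0,1,\infty\}$ the parents are labelled $\sigma_0,\sigma_1$ so that the parents of $\sigma_1$ are $\sigma_0$ and another point $\sigma'\in\mathcal{Q}$.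 Let $\mathcal{F}$ be the set of finitely supported functions $\mathbb{Z}^2\to\mathbb{Z}$, with convolution $F*G(u)=\sum_{x+y=u}F(x)G(y)$; $1\!\!1_U$ is the indicator function of $U$; $\Lambda=\{(0,0),(0,2),(2,0)\}$. Define $F_\sigma=1\!\!1_{J_\sigma}$ for $\sigma\in\{0,1,\infty\}$, and recursively $F_\sigma=F_{\sigma_0}*F_{\sigma_1}*1\!\!1_\Lambda-F_{\sigma'}$ for $\sigma\in\mathcal{Q}\smallsetminus\{0,1,\infty\}$. *)

From mathcomp Require Import all_boot all_order all_algebra.
Set Implicit Arguments. Unset Strict Implicit. Unset Printing Implicit Defensive.
Import Order.TTheory GRing.Theory Num.Theory.
Local Open Scope ring_scope.

(* An element sigma = q/p of Q = Q_{>=0} u {oo} is represented by the pair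
   (q, p) of coprime naturals (0 = (0,1), oo = (1,0)). *)
Definition slope := (nat * nat)%type.

Definition point := (int * int)%type.
Definition padd (x y : point) : point := (x.1 + y.1, x.2 + y.2).

Definition inJ (s : slope) (u : point) : bool :=
  let q := (s.1)%:Z in let p := (s.2)%:Z in
  [&& (2 %| u.1 - q)%Z, (2 %| u.2 - p)%Z,
      - q <= u.1, - p <= u.2, u.1 + u.2 <= p + q - 2 &
      0 <= p * u.1 + q * u.2].

(* Finitely supported functions Z^2 -> Z, given as formal finite sums
   sum_k c_k [x_k]; [ev f] is the function they denote. *)
Definition fsf := seq (point * int).
Definition ev (f : fsf) (u : point) : int := \sum_(x <- f | x.1 == u) x.2.
(* convolution: ev (conv f g) u = sum_(x + y = u) ev f x * ev g y *)
Definition conv (f g : fsf) : fsf :=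
  [seq (padd x.1 y.1, x.2 * y.2) | x <- f, y <- g].
Definition fsub (f g : fsf) : fsf := f ++ [seq (x.1, - x.2) | x <- g].

(* indicator of J_sigma (J_sigma is contained in the box enumerated below) *)
Definition Jind (s : slope) : fsf :=
  let N := (s.1 + s.2)%N in
  let rng := [seq (i%:Z - N%:Z) | i <- iota 0 (3 * N).+1] in
  [seq (u, 1) | u <- [seq (a, b) | a <- rng, b <- rng] & inJ s u].

Definition Lam : fsf := [:: ((0, 0), 1); ((0, 2), 1); ((2, 0), 1)].

(* Farey (Stern--Brocot) parents of sigma = q/p: the unique decomposition
   q/p = (a + c)/(b + d) with a/b, c/d Farey neighbours (c*b - a*d = 1),
   i.e. the endpoints of the edge of the Farey triangle (a/b, q/p, c/d)
   first crossed by the geodesic from sigma to sqrt(-1). *)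
Definition lparent (s : slope) : slope :=
  let q := s.1 in let p := s.2 in
  head (0%N, 1%N)
    [seq ab <- [seq (a, b) | a <- iota 0 q.+1, b <- iota 0 p.+1] |
       ((q - ab.1) * ab.2 == ab.1 * (p - ab.2) + 1)%N].
Definition rparent (s : slope) : slope :=
  ((s.1 - (lparent s).1)%N, (s.2 - (lparent s).2)%N).

(* sigma_1 : the parent whose own parents contain the other parent sigma_0
   (it is the parent with the larger q + p);  sigma' : the other parent of
   sigma_1. *)
Definition par1 (s : slope) : slope :=
  if ((lparent s).1 + (lparent s).2 < (rparent s).1 + (rparent s).2)%N
  then rparent s else lparent s.
Definition par0 (s : slope) : slope :=
  if ((lparent s).1 + (lparent s).2 < (rparent s).1 + (rparent s).2)%N
  then lparent s else rparent s.
Definition parp (s : slope) : slope :=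
  let s1 := par1 s in
  if lparent s1 == par0 s then rparent s1 else lparent s1.

Definition is_base (s : slope) : bool :=
  (s == (0, 1)%N) || (s == (1, 1)%N) || (s == (1, 0)%N).

Fixpoint Fl (n : nat) (s : slope) : fsf :=
  match n with
  | 0 => [::]
  | n'.+1 =>
    if is_base s then Jind s
    else fsub (conv (conv (Fl n' (par0 s)) (Fl n' (par1 s))) Lam)
              (Fl n' (parp s))
  end.

(* F_sigma as a function Z^2 -> Z (fuel q + p suffices) *)
Definition F (s : slope) (u : point) : int := ev (Fl (s.1 + s.2) s) u.

Definition extremal (s : slope) (c : point) : bool :=
  let q := (s.1)%:Z in let p := (s.2)%:Z in
  if (s == (0, 1)%N) || (s == (1, 0)%N) then inJ s c
  else c \in [:: (q, - p); (q + 2 * (p - 1), - p);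
                 (- q, p); (- q, p + 2 * (q - 1))].

(* Induction along the Farey tree.  For sigma = q/p with parents sigma0 = q0/p0
   and sigma1 = (q0 + q')/(p0 + p'), whose parents are sigma0 and sigma' = q'/p',
   one has q = 2 q0 + q', p = 2 p0 + p' and q' p0 - q0 p' = +-1; swapping the two
   coordinates exchanges the signs, so we may take +1.  Put l(u) = p u.1 + q u.2.
   On J_sigma0 and J_sigma1 the functional l is odd and >= -1, with equality only
   at the vertices P_0(sigma0) and Q_0(sigma1); on Lambda it is even and >= 0, and
   on J_sigma' it is even and >= -2, with equality only at
   Q_0(sigma') = P_0(sigma0) + Q_0(sigma1).  A point of J_sigma0 + J_sigma1 + Lambda
   outside J_sigma has l < 0, so it can only be Q_0(sigma'), where the unique term
   of the convolution cancels against F_sigma'.  Each vertex c of J_sigma is the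
   sum of the points of J_sigma0, J_sigma1 and Lambda minimising a common linear
   functional, so the convolution has a single term there, a product of two values
   at vertices, hence equal to 1, while c lies outside J_sigma'. *)

From mathcomp Require Import all_boot all_order all_algebra.
From mathcomp Require Import zify ring.
Set Implicit Arguments. Unset Strict Implicit. Unset Printing Implicit Defensive.
Import Order.TTheory GRing.Theory Num.Theory.

(** * Farey parents *)

Definition farey_left (q p : nat) (L : nat * nat) :=
  [/\ L.1 <= q, L.2 <= p & q * L.2 = L.1 * p + 1].

Lemma farey_left_uniq q p L L' : farey_left q p L -> farey_left q p L' -> L = L'.
Proof.
case: L L' => a b [a' b'] [/= ha hb det] [/= ha' hb' det'].
(* |D| >= 1 would force {a, a'} = {0, q} and {b, b'} = {0, p}, against [det]. *)
pose D := (a%:Z * b'%:Z - a'%:Z * b%:Z)%R.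
have diffs : (q%:Z * D = a%:Z - a'%:Z /\ p%:Z * D = b%:Z - b'%:Z)%R.
  by rewrite /D; split; nia.
have [D0|[D1|D1]] : (D = 0 \/ 1 <= D \/ D <= -1)%R by lia.
- by move: diffs; rewrite D0 !mulr0 => -[e1 e2]; congr pair; lia.
- nia.
- nia.
Qed.

Lemma lparent_eq q p L : farey_left q p L -> lparent (q, p) = L.
Proof.
move=> hL; rewrite /lparent.
set l := [seq _ <- _ | _].
have Ll : L \in l.
  case: L hL => a b [/= ha hb det].
  by rewrite mem_filter allpairs_f ?mem_iota /= ?andbT; [apply/eqP; nia | lia..].
have spec_l : {in l, forall L', farey_left q p L'}.
  move=> [a b]; rewrite mem_filter => /andP[/eqP det /allpairsP[[x y] [hx hy [ea eb]]]].
  subst a b; rewrite !mem_iota /= in hx hy; split => //=; try lia.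
  have xy_le_xp : x * y <= x * p by rewrite leq_mul2l; lia.
  have xy_le_qy : x * y <= q * y by rewrite leq_mul2r; lia.
  move: det; rewrite /= mulnBl mulnBr; lia.
case: l Ll spec_l => [//|L' l] _ spec_l /=.
exact: farey_left_uniq (spec_l _ (mem_head _ _)) hL.
Qed.

Lemma farey_left_exists q p : coprime q p -> 0 < q -> 0 < p ->
  exists L, farey_left q p L.
Proof.
move=> cop q_gt0 p_gt0.
have [x hx /dvdnP[k hk]] := Bezoutl q p_gt0.
move: hk; rewrite gcdnC (eqP cop) => hk.
by exists (q - k, p - x); split => /=; nia.
Qed.

Lemma farey_sum_lt a b c d : c * b = a * d + 1 -> a + b < c + d -> a <= c /\ b <= d.
Proof. nia. Qed.

Lemma farey_sum_eq a b c d : c * b = a * d + 1 -> a + b = c + d -> [/\ a = 0, b = 1, c = 1 & d = 0].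
Proof.
move=> det sum.
have prod1 : ((c%:Z - a%:Z) * (a%:Z + b%:Z) = 1)%R by nia.
have [ca|ca] := leqP c a; first nia.
have : (a = 0 /\ b = 1) \/ (a = 1 /\ b = 0) by nia.
clear prod1; case=> -[ea eb]; rewrite ea eb in det sum *; split; lia.
Qed.

Lemma farey_parents q p : coprime q p -> ~~ is_base (q, p) ->
  exists q0 p0 q' p', [/\ par0 (q, p) = (q0, p0), par1 (q, p) = (q0 + q', p0 + p'),
    parp (q, p) = (q', p'), (q, p) = (q0 + (q0 + q'), p0 + (p0 + p')) &
    q' * p0 = q0 * p' + 1 \/ q0 * p' = q' * p0 + 1].
Proof.
move=> cop nb.
have [q_gt0 p_gt0] : 0 < q /\ 0 < p.
  by case: q p cop nb => [|q] [|p] //; rewrite /coprime ?gcd0n ?gcdn0 => /eqP->.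
have [[a b] hL] := farey_left_exists cop q_gt0 p_gt0.
rewrite /parp /par0 /par1 /rparent (lparent_eq hL) /=.
case: hL => /= ha hb det.
have det' : (q - a) * b = a * (p - b) + 1 by nia.
have [lt|ge] := ltnP (a + b) (q - a + (p - b)).
- have [ac bd] := farey_sum_lt det' lt.
  rewrite (@lparent_eq (q - a) (p - b) (a, b)) ?eqxx /=; last by split.
  exists a, b, (q - a - a), (p - b - b); split => //; try (congr pair; lia).
  by left; nia.
- have gt : q - a + (p - b) < a + b.
    rewrite ltn_neqAle ge andbT; apply/eqP => eq_sum.
    have [ea eb eqa eqb] := farey_sum_eq det' (esym eq_sum).
    by move: nb; rewrite /is_base !xpair_eqE; lia.
  have [ca db] := @farey_sum_lt (p - b) (q - a) b a ltac:(nia) ltac:(lia).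
  rewrite (@lparent_eq a b (a - (q - a), b - (p - b))) /=; last by split => /=; nia.
  exists (q - a), (p - b), (a - (q - a)), (b - (p - b)).
  have rparent_par1 : (a - (a - (q - a)), b - (b - (p - b))) = (q - a, p - b).
    by congr pair; lia.
  split; try (congr pair; lia).
  + by case: eqP => [->|]; rewrite ?rparent_par1.
  + by right; nia.
Qed.

Local Open Scope ring_scope.

(** * The polygons J *)

Definition pswap (u : point) : point := (u.2, u.1).
Definition psub (x y : point) : point := (x.1 - y.1, x.2 - y.2).
Definition dot (phi u : point) : int := phi.1 * u.1 + phi.2 * u.2.

Lemma pswapK : involutive pswap. Proof. by case. Qed.

Lemma inJ_swap q p u : inJ (p, q) (pswap u) = inJ (q, p) u.
Proof. by rewrite /inJ /=; lia. Qed.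

Lemma extremal_swap q p c : extremal (p, q) (pswap c) = extremal (q, p) c.
Proof.
rewrite /extremal /= inJ_swap !xpair_eqE [(p == 0%N) && _]andbC [(p == 1%N) && _]andbC orbC.
(* The vertex list of (p, q) is the swap of a rotation of that of (q, p). *)
by case: ifP => // _; rewrite -[RHS](mem_rot 2) -(mem_map (can_inj pswapK)).
Qed.

(* [P0], [Plast], [Q0], [Qlast] name the vertices P_0, P_(p-1), Q_0, Q_(q-1). *)
Lemma extremal_P0 (a b : nat) : (0 < b)%N -> extremal (a, b) (a%:Z, - b%:Z).
Proof. by rewrite /extremal /inJ /= !inE !xpair_eqE; case: ifP; lia. Qed.

Lemma extremal_Plast (a b : nat) : extremal (a, b) (a%:Z + 2 * (b%:Z - 1), - b%:Z).
Proof. by rewrite /extremal /inJ /= !inE !xpair_eqE; case: ifP; lia. Qed.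

Lemma extremal_Q0 (a b : nat) : (0 < a)%N -> extremal (a, b) (- a%:Z, b%:Z).
Proof. by move=> a_gt0; rewrite -extremal_swap extremal_P0. Qed.

Lemma extremal_Qlast (a b : nat) : extremal (a, b) (- a%:Z, b%:Z + 2 * (a%:Z - 1)).
Proof. by rewrite -extremal_swap extremal_Plast. Qed.

Definition unique_min (A : pred point) (phi v : point) :=
  forall u, A u -> dot phi v <= dot phi u /\ (dot phi u = dot phi v -> u = v).

Lemma unique_min_swap q p phi v : unique_min (inJ (q, p)) phi v ->
  unique_min (inJ (p, q)) (pswap phi) (pswap v).
Proof.
move=> min_v u; rewrite -[u]pswapK inJ_swap => /min_v.
rewrite /dot /= [_ * u.2 + _]addrC [_ * v.2 + _]addrC => -[le eq].
by split=> // /eq ->.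
Qed.

Lemma P0_unique_min (a b : nat) (P Q : int) : 0 < P -> P * a%:Z < Q * b%:Z ->
  unique_min (inJ (a, b)) (P, Q) (a%:Z, - b%:Z).
Proof.
move=> P_gt0 lt [x y]; rewrite /inJ /dot /= => hJ.
have {hJ} [y_ge l_ge] : - b%:Z <= y /\ 0 <= b%:Z * x + a%:Z * y by lia.
have b_gt0 : 0 < b%:Z.
  have : 0 <= P * a%:Z by apply: mulr_ge0; lia.
  by case: (b) lt => [|n]; rewrite ?mulr0; lia.
(* One nonnegative term for each of the two edges of J through P_0. *)
have key : b%:Z * (P * x + Q * y - (P * a%:Z + Q * - b%:Z)) =
           P * (b%:Z * x + a%:Z * y) + (Q * b%:Z - P * a%:Z) * (y + b%:Z) by ring.
have h1 : 0 <= P * (b%:Z * x + a%:Z * y) by apply: mulr_ge0; lia.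
have h2 : 0 <= (Q * b%:Z - P * a%:Z) * (y + b%:Z) by apply: mulr_ge0; lia.
split; first nia.
move=> e; rewrite e subrr mulr0 in key.
have /eqP : (Q * b%:Z - P * a%:Z) * (y + b%:Z) = 0 by lia.
rewrite mulf_eq0 => /orP[/eqP|/eqP y_eq]; first lia.
have /eqP : P * (b%:Z * x + a%:Z * y) = 0 by lia.
rewrite mulf_eq0 => /orP[/eqP|/eqP x_eq]; first lia.
by congr (_, _); nia.
Qed.

Lemma Q0_unique_min (a b : nat) (P Q : int) : 0 < Q -> Q * b%:Z < P * a%:Z ->
  unique_min (inJ (a, b)) (P, Q) (- a%:Z, b%:Z).
Proof. by move=> Q_gt0 lt; apply: (unique_min_swap (P0_unique_min Q_gt0 lt)). Qed.

Lemma Plast_unique_min (a b : nat) :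
  unique_min (inJ (a, b)) (-1, 0) (a%:Z + 2 * (b%:Z - 1), - b%:Z).
Proof. by move=> [x y]; rewrite /inJ /dot /= => hJ; split=> [|e]; [|congr (_, _)]; lia. Qed.

Lemma Qlast_unique_min (a b : nat) :
  unique_min (inJ (a, b)) (0, -1) (- a%:Z, b%:Z + 2 * (a%:Z - 1)).
Proof. exact: (unique_min_swap (@Plast_unique_min b a)). Qed.

Lemma dot_parity (a b : nat) phi u :
  inJ (a, b) u -> (2 %| dot phi u - dot phi (a%:Z, b%:Z))%Z.
Proof.
case: u => x y; rewrite /inJ /dot /= => /andP[/dvdzP[k1 e1] /andP[/dvdzP[k2 e2] _]].
apply/dvdzP; exists (phi.1 * k1 + phi.2 * k2).
by rewrite -[x](subrK a%:Z) -[y](subrK b%:Z) e1 e2; ring.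
Qed.

Lemma dotD phi u v : dot phi (padd u v) = dot phi u + dot phi v.
Proof. by rewrite /dot /padd /=; ring. Qed.

Lemma psubr0 u : psub u (0, 0) = u.
Proof. by case: u => x y; rewrite /psub /= !subr0. Qed.

Lemma padd_psubK u l x : padd (padd x (psub (psub u l) x)) l = u.
Proof. by case: u => u1 u2; rewrite /padd /psub /=; congr (_, _); ring. Qed.

Lemma psub_paddK a b l : psub (psub (padd (padd a b) l) l) a = b.
Proof. by case: b => b1 b2; rewrite /padd /psub /=; congr (_, _); ring. Qed.

Definition inLam (l : point) : bool := [|| l == (0, 0), l == (0, 2) | l == (2, 0)].

Definition convLam (C : point -> int) (u : point) : int :=
  C u + C (psub u (0, 2)) + C (psub u (2, 0)).

Lemma Lam_unique_min0 phi : 0 < phi.1 -> 0 < phi.2 -> unique_min inLam phi (0, 0).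
Proof.
case: phi => P Q /= P_gt0 Q_gt0 [x y]; rewrite /inLam /dot !xpair_eqE /=.
by case/or3P=> /andP[/eqP-> /eqP->]; split=> [|e]; try congr (_, _); lia.
Qed.

Lemma Lam_unique_min_right : unique_min inLam (-1, 0) (2, 0).
Proof.
move=> [x y]; rewrite /inLam /dot !xpair_eqE /=.
by case/or3P=> /andP[/eqP-> /eqP->]; split=> [|e]; try congr (_, _); lia.
Qed.

Lemma Lam_unique_min_up : unique_min inLam (0, -1) (0, 2).
Proof.
move=> [x y]; rewrite /inLam /dot !xpair_eqE /=.
by case/or3P=> /andP[/eqP-> /eqP->]; split=> [|e]; try congr (_, _); lia.
Qed.

Lemma inJ_padd (q0 p0 q1 p1 : nat) x y l :
  inJ (q0, p0) x -> inJ (q1, p1) y -> inLam l ->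
  0 <= dot ((p0 + p1)%N%:Z, (q0 + q1)%N%:Z) (padd (padd x y) l) ->
  inJ (q0 + q1, p0 + p1) (padd (padd x y) l).
Proof.
case: x y l => [x1 x2] [y1 y2] [l1 l2]; rewrite /inJ /inLam /dot /padd /= !xpair_eqE.
lia.
Qed.

Lemma inJ_widen (q0 p0 q' p' : nat) u :
  inJ (q', p') u -> 0 <= dot ((p0 + (p0 + p'))%N%:Z, (q0 + (q0 + q'))%N%:Z) u ->
  inJ (q0 + (q0 + q'), p0 + (p0 + p')) u.
Proof. by case: u => x y; rewrite /inJ /dot /=; lia. Qed.

(** * Convolution with the indicator of Lambda *)

(* The only property of the convolution [ev (conv f g)] used by the inductive
   step; unlike the convolution sum itself it is plainly invariant under the
   coordinate swap. *)
Definition single_term_conv (G0 G1 C : point -> int) :=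
  forall v a0, (forall a, a != a0 -> G0 a * G1 (psub v a) = 0) ->
  C v = G0 a0 * G1 (psub v a0).

Section SingleDecomposition.

Variables (A0 A1 : pred point) (G0 G1 C : point -> int).
Hypotheses (supp0 : forall x, G0 x != 0 -> A0 x) (supp1 : forall y, G1 y != 0 -> A1 y).
Hypothesis convC : single_term_conv G0 G1 C.

Lemma convLam_single u a l0 : inLam l0 ->
  (forall x l, inLam l -> G0 x * G1 (psub (psub u l) x) != 0 -> x = a /\ l = l0) ->
  convLam C u = G0 a * G1 (psub (psub u l0) a).
Proof.
move=> l0L single.
have C_l l : inLam l ->
    C (psub u l) = if l == l0 then G0 a * G1 (psub (psub u l0) a) else 0.
  move=> lL; rewrite (convC (a0 := a)) => [|x xa]; last first.
    by apply/eqP/negPn/negP => /(single _ _ lL) [ex _]; rewrite ex eqxx in xa.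
  case: eqP => [-> //|nl]; apply/eqP/negPn/negP.
  by move=> /(single _ _ lL) [_ el].
rewrite /convLam -{1}[u]psubr0 !C_l ?/inLam ?eqxx ?orbT //.
by move: l0L; rewrite /inLam => /or3P[]/eqP->; rewrite !xpair_eqE /=; lia.
Qed.

Lemma unique_min_decomp phi a b l0 x y l :
  unique_min A0 phi a -> unique_min A1 phi b -> unique_min inLam phi l0 ->
  A0 x -> A1 y -> inLam l ->
  dot phi (padd (padd x y) l) <= dot phi (padd (padd a b) l0) ->
  [/\ x = a, y = b & l = l0].
Proof.
move=> min_a min_b min_l /min_a[xa ex] /min_b[yb ey] /min_l[ll el].
by rewrite !dotD => le; split; [apply: ex | apply: ey | apply: el]; lia.
Qed.

Lemma convLam_at_min phi a b l0 u :
  unique_min A0 phi a -> unique_min A1 phi b -> unique_min inLam phi l0 -> inLam l0 ->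
  (forall x l, inLam l -> A0 x -> A1 (psub (psub u l) x) ->
     dot phi u <= dot phi (padd (padd a b) l0)) ->
  convLam C u = if u == padd (padd a b) l0 then G0 a * G1 b else 0.
Proof.
move=> min_a min_b min_l l0L bound.
have decomp x l : inLam l -> G0 x * G1 (psub (psub u l) x) != 0 ->
    [/\ x = a, l = l0 & u = padd (padd a b) l0].
  rewrite mulf_eq0 negb_or => lL /andP[/supp0 xA /supp1 yA].
  have := unique_min_decomp min_a min_b min_l xA yA lL.
  rewrite padd_psubK => /(_ (bound _ _ lL xA yA)) [ex ey el].
  by split=> //; rewrite -ey ex el padd_psubK.
rewrite (@convLam_single u a l0 l0L) => [|x l lL /(decomp _ _ lL) [] //].
case: eqP => [->|ne]; first by rewrite psub_paddK.
by apply/eqP/negPn/negP => /(decomp _ _ l0L) [].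
Qed.

End SingleDecomposition.

Definition J_shaped (s : slope) (G : point -> int) :=
  (forall u, G u != 0 -> inJ s u) /\ (forall c, extremal s c -> G c = 1).

Lemma eq_J_shaped s G H : G =1 H -> J_shaped s G -> J_shaped s H.
Proof. by move=> eGH [supp ext]; split=> u; rewrite -eGH; [apply: supp | apply: ext]. Qed.

Lemma J_shaped_swap q p G : J_shaped (q, p) G -> J_shaped (p, q) (G \o pswap).
Proof.
case=> supp ext; split=> u /=; first by move/supp; rewrite -inJ_swap pswapK.
by move=> e; apply: ext; rewrite -extremal_swap pswapK.
Qed.

Lemma single_term_conv_swap G0 G1 C : single_term_conv G0 G1 C ->
  single_term_conv (G0 \o pswap) (G1 \o pswap) (C \o pswap).
Proof.
move=> convC v a0 single /=; apply: convC => a ne; rewrite -[a]pswapK.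
by apply: single; apply: contra ne => /eqP <-; rewrite pswapK.
Qed.

Lemma convLam_swap C u : convLam (C \o pswap) u = convLam C (pswap u).
Proof. by rewrite /convLam /= addrAC. Qed.

(** * The Farey step *)

Section FareyStep.

Variables q0 p0 q' p' : nat.
Hypothesis farey : (q' * p0 = q0 * p' + 1)%N.
Local Notation q1 := (q0 + q')%N.
Local Notation p1 := (p0 + p')%N.
Local Notation q := (q0 + q1)%N.
Local Notation p := (p0 + p1)%N.
Local Notation ell := (p%:Z, q%:Z).

Variables G0 G1 G' C : point -> int.
Hypotheses (shaped0 : J_shaped (q0, p0) G0) (shaped1 : J_shaped (q1, p1) G1).
Hypotheses (shaped' : J_shaped (q', p') G') (convC : single_term_conv G0 G1 C).

Lemma farey_step_pos : (0 < p0)%N /\ (0 < q')%N.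
Proof. by move: farey; case: p0 => [|?]; case: q' => [|?]; rewrite ?muln0 /=; lia. Qed.

Lemma step_support u : convLam C u - G' u != 0 -> inJ (q, p) u.
Proof.
have [p0_gt0 q'_gt0] := farey_step_pos.
apply: contraR => uJ; apply/eqP.
have min0 : unique_min (inJ (q0, p0)) ell (q0%:Z, - p0%:Z) by apply: P0_unique_min; lia.
have min1 : unique_min (inJ (q1, p1)) ell (- q1%:Z, p1%:Z) by apply: Q0_unique_min; lia.
have min' : unique_min (inJ (q', p')) ell (- q'%:Z, p'%:Z) by apply: Q0_unique_min; lia.
have minL : unique_min inLam ell (0, 0) by apply: Lam_unique_min0; rewrite /=; lia.
have ell_bound x l : inLam l -> inJ (q0, p0) x -> inJ (q1, p1) (psub (psub u l) x) ->
    dot ell u <= dot ell (padd (padd (q0%:Z, - p0%:Z) (- q1%:Z, p1%:Z)) (0, 0)).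
  move=> lL xJ yJ; have := inJ_padd xJ yJ lL; rewrite padd_psubK => /contra /(_ uJ).
  (* l is odd on J_sigma0 and J_sigma1 and even on Lambda, so l u < 0 forces l u <= -2. *)
  have := dot_parity ell xJ; have := dot_parity ell yJ.
  move: lL; case: (l) => l1 l2; case: (x) => x1 x2; case: (u) => u1 u2.
  by rewrite /inLam /dot /padd /psub /= -!ltNge !xpair_eqE; lia.
rewrite (convLam_at_min (proj1 shaped0) (proj1 shaped1) convC min0 min1 minL) //.
have -> : padd (padd (q0%:Z, - p0%:Z) (- q1%:Z, p1%:Z)) (0, 0) = (- q'%:Z, p'%:Z).
  by rewrite /padd /=; congr (_, _); lia.
have -> : G' u = if u == (- q'%:Z, p'%:Z) then 1 else 0.
  case: eqP => [->|ne]; first by apply: (proj2 shaped'); apply: extremal_Q0.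
  apply/eqP/negPn/negP => /(proj1 shaped') u_J'.
  have /contra/(_ uJ) := inJ_widen (q0 := q0) (p0 := p0) u_J'; rewrite -ltNge => ell_neg.
  have := dot_parity ell u_J'; have [+ /(_ _)/ne] := min' _ u_J'.
  by case: (u) ell_neg => u1 u2; rewrite /dot /=; lia.
rewrite (proj2 shaped0 (q0%:Z, - p0%:Z)) ?extremal_P0 //.
rewrite (proj2 shaped1 (- q1%:Z, p1%:Z)); last by apply: extremal_Q0; lia.
by case: eqP => _; rewrite ?mulr1 subrr.
Qed.

Lemma step_vertex phi a b l0 c :
  unique_min (inJ (q0, p0)) phi a -> unique_min (inJ (q1, p1)) phi b ->
  unique_min inLam phi l0 -> inLam l0 ->
  extremal (q0, p0) a -> extremal (q1, p1) b ->
  c = padd (padd a b) l0 -> ~~ inJ (q', p') c -> convLam C c - G' c = 1.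
Proof.
move=> min_a min_b min_l l0L ext_a ext_b -> c_J'.
rewrite (convLam_at_min (proj1 shaped0) (proj1 shaped1) convC min_a min_b min_l l0L);
  last by move=> *; rewrite lexx.
have -> : G' (padd (padd a b) l0) = 0.
  by apply/eqP; apply: contraNT c_J' => /(proj1 shaped').
by rewrite eqxx (proj2 shaped0 _ ext_a) (proj2 shaped1 _ ext_b) mulr1 subr0.
Qed.

Lemma step_extremal c : extremal (q, p) c -> convLam C c - G' c = 1.
Proof.
have [p0_gt0 q'_gt0] := farey_step_pos.
have Qlast : convLam C (- q%:Z, p%:Z + 2 * (q%:Z - 1)) - G' (- q%:Z, p%:Z + 2 * (q%:Z - 1)) = 1.
  apply: (step_vertex (@Qlast_unique_min q0 p0) (@Qlast_unique_min q1 p1) Lam_unique_min_up).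
  - by rewrite /inLam eqxx orbT.
  - exact: extremal_Qlast.
  - exact: extremal_Qlast.
  - by rewrite /padd /=; congr (_, _); lia.
  - by rewrite /inJ /=; lia.
rewrite /extremal /= !xpair_eqE ifN; last by lia.
rewrite !inE => /or4P[]/eqP-> //.
- apply: (step_vertex (phi := (1, (q + 1)%N%:Z)) (l0 := (0, 0))).
  + by apply: P0_unique_min; nia.
  + by apply: P0_unique_min; nia.
  + by apply: Lam_unique_min0 => /=; lia.
  + by rewrite /inLam eqxx.
  + exact: extremal_P0.
  + by apply: extremal_P0; lia.
  + by rewrite /padd /=; congr (_, _); lia.
  + by rewrite /inJ /=; lia.
- apply: (step_vertex (@Plast_unique_min q0 p0) (@Plast_unique_min q1 p1) Lam_unique_min_right).
  + by rewrite /inLam eqxx !orbT.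
  + exact: extremal_Plast.
  + exact: extremal_Plast.
  + by rewrite /padd /=; congr (_, _); lia.
  + by rewrite /inJ /=; lia.
- have [q0_eq0|q0_gt0] := posnP q0.
    (* q0 = 0 forces q = 1, and then Q_0 = Q_(q-1). *)
    move: farey Qlast; rewrite q0_eq0 mul0n add0n => /eqP; rewrite muln_eq1.
    by case/andP=> /eqP-> _; rewrite mulr0 addr0.
  apply: (step_vertex (phi := ((p + 1)%N%:Z, 1)) (l0 := (0, 0))).
  + by apply: Q0_unique_min; nia.
  + by apply: Q0_unique_min; nia.
  + by apply: Lam_unique_min0 => /=; lia.
  + by rewrite /inLam eqxx.
  + exact: extremal_Q0.
  + by apply: extremal_Q0; lia.
  + by rewrite /padd /=; congr (_, _); lia.
  + by rewrite /inJ /=; lia.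
Qed.

Lemma step_J_shaped : J_shaped (q, p) (fun u => convLam C u - G' u).
Proof. by split; [apply: step_support | apply: step_extremal]. Qed.

End FareyStep.

Lemma J_shaped_step q0 p0 q' p' G0 G1 G' C :
  (q' * p0 = q0 * p' + 1 \/ q0 * p' = q' * p0 + 1)%N ->
  J_shaped (q0, p0) G0 -> J_shaped (q0 + q', p0 + p') G1 -> J_shaped (q', p') G' ->
  single_term_conv G0 G1 C ->
  J_shaped (q0 + (q0 + q'), p0 + (p0 + p')) (fun u => convLam C u - G' u).
Proof.
case=> farey shaped0 shaped1 shaped' convC.
  exact: (step_J_shaped farey shaped0 shaped1 shaped' convC).
have farey_swap : (p' * q0 = p0 * q' + 1)%N by lia.
have := J_shaped_swap (step_J_shaped farey_swap (J_shaped_swap shaped0)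
  (J_shaped_swap shaped1) (J_shaped_swap shaped') (single_term_conv_swap convC)).
by apply: eq_J_shaped => u /=; rewrite convLam_swap pswapK.
Qed.

(** * Formal sums *)

Lemma ev_fsub f g u : ev (fsub f g) u = ev f u - ev g u.
Proof. by rewrite /fsub /ev big_cat /= big_map -sumrN. Qed.

Lemma padd_eq_psubl x y u : (padd x y == u) = (x == psub u y).
Proof. by case: x y u => [x1 x2] [y1 y2] [u1 u2]; rewrite /padd /psub !xpair_eqE /=; lia. Qed.

Lemma padd_eq_psubr x y u : (padd x y == u) = (y == psub u x).
Proof. by case: x y u => [x1 x2] [y1 y2] [u1 u2]; rewrite /padd /psub !xpair_eqE /=; lia. Qed.

Lemma ev_conv_double f g u :
  ev (conv f g) u = \sum_(x <- f) \sum_(y <- g) (padd x.1 y.1 == u)%:R * (x.2 * y.2).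
Proof.
rewrite /ev /conv big_mkcond big_allpairs_dep /=.
by apply: eq_bigr => x _; apply: eq_bigr => y _; case: eqP; rewrite ?mul1r ?mul0r.
Qed.

Lemma ev_convl f g u : ev (conv f g) u = \sum_(x <- f) x.2 * ev g (psub u x.1).
Proof.
rewrite ev_conv_double; apply: eq_bigr => x _.
rewrite /ev mulr_sumr [RHS]big_mkcond.
by apply: eq_bigr => y _; rewrite padd_eq_psubr; case: eqP; rewrite ?mul1r ?mul0r ?mulr0.
Qed.

Lemma ev_convr f g u : ev (conv f g) u = \sum_(y <- g) ev f (psub u y.1) * y.2.
Proof.
rewrite ev_conv_double exchange_big; apply: eq_bigr => y _.
rewrite /ev mulr_suml [RHS]big_mkcond.
by apply: eq_bigr => x _; rewrite padd_eq_psubl; case: eqP; rewrite ?mul1r ?mul0r ?mulrA.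
Qed.

Lemma sum_by_key f (H : point -> int) :
  \sum_(x <- f) x.2 * H x.1 = \sum_(a <- undup (map fst f)) ev f a * H a.
Proof.
transitivity (\sum_(a <- undup (map fst f)) \sum_(x <- f) (x.1 == a)%:R * (x.2 * H x.1));
  last first.
  apply: eq_bigr => a _; rewrite /ev mulr_suml [RHS]big_mkcond.
  by apply: eq_bigr => x _; case: eqP => [->|]; rewrite ?mul1r ?mul0r.
rewrite exchange_big; apply: eq_big_seq => x xf.
rewrite (bigD1_seq x.1) ?undup_uniq ?mem_undup ?map_f //= eqxx mul1r big1 ?addr0 //.
by move=> a; rewrite eq_sym => /negbTE->; rewrite mul0r.
Qed.

Lemma ev_conv f g u :
  ev (conv f g) u = \sum_(a <- undup (map fst f)) ev f a * ev g (psub u a).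
Proof. by rewrite ev_convl (sum_by_key f (fun a => ev g (psub u a))). Qed.

Lemma single_term_conv_ev f g : single_term_conv (ev f) (ev g) (ev (conv f g)).
Proof.
move=> v a0 single; rewrite ev_conv.
have [a0f|a0f] := boolP (a0 \in undup (map fst f)).
  rewrite (bigD1_seq a0) ?undup_uniq //= big1_seq ?addr0 // => a /andP[ne _].
  exact: single.
rewrite big1_seq => [|a /andP[_ af]]; last first.
  by apply: single; apply: contraNneq a0f => ea; rewrite -ea.
have -> : ev f a0 = 0.
  by rewrite /ev big1_seq // => x /andP[/eqP ex xf]; rewrite -ex mem_undup map_f in a0f.
by rewrite mul0r.
Qed.

Lemma ev_conv_Lam h u : ev (conv h Lam) u = convLam (ev h) u.
Proof. by rewrite ev_convr /Lam !big_cons big_nil /= !mulr1 addr0 psubr0 addrA. Qed.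

Lemma J_shaped_base s : is_base s -> J_shaped s (ev (Jind s)).
Proof.
rewrite /is_base => /orP[/orP[]|] /eqP->; [
  rewrite (_ : Jind _ = [:: ((0, -1), 1)]); last by vm_compute |
  rewrite (_ : Jind _ = [:: ((-1, 1), 1); ((1, -1), 1)]); last by vm_compute |
  rewrite (_ : Jind _ = [:: ((-1, 0), 1)]); last by vm_compute].
all: split=> -[x y]; rewrite /ev /extremal /inJ !big_cons big_nil /= ?inE !xpair_eqE.
all: by do ?case: ifP; lia.
Qed.

Lemma coprime_det a b c d : (a * d = c * b + 1 \/ c * b = a * d + 1)%N -> coprime a b.
Proof.
rewrite /coprime -dvdn1 => det.
have gcd_ad : (gcdn a b %| a * d)%N by rewrite dvdn_mulr ?dvdn_gcdl.
have gcd_cb : (gcdn a b %| c * b)%N by rewrite dvdn_mull ?dvdn_gcdr.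
by case: det => e; [move: gcd_ad | move: gcd_cb]; rewrite e ?(dvdn_addr _ gcd_cb) ?(dvdn_addr _ gcd_ad).
Qed.

Lemma coprime_addn_gt0 q p : coprime q p -> (0 < q + p)%N.
Proof. by case: q p => [|q] [|p]; rewrite /coprime ?gcdn0. Qed.

Lemma Fl_J_shaped n q p : coprime q p -> (q + p <= n)%N -> J_shaped (q, p) (ev (Fl n (q, p))).
Proof.
elim: n q p => [|n IHn] q p cop le_n.
  have [q_eq0 p_eq0] : q = 0%N /\ p = 0%N by lia.
  by move: cop; rewrite q_eq0 p_eq0 /coprime gcdn0.
rewrite /=; case: ifP => [/J_shaped_base //|/negbT nbase].
have [q0 [p0 [q' [p' [-> -> -> [eq_q eq_p] farey]]]]] := farey_parents cop nbase.
subst q p.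
have cop0 : coprime q0 p0 by apply: (@coprime_det _ _ q' p'); lia.
have cop1 : coprime (q0 + q') (p0 + p') by apply: (@coprime_det _ _ q0 p0); lia.
have cop' : coprime q' p' by apply: (@coprime_det _ _ q0 p0); lia.
apply: (eq_J_shaped _ (J_shaped_step farey (IHn _ _ cop0 _) (IHn _ _ cop1 _) (IHn _ _ cop' _)
  (@single_term_conv_ev _ _))) => [u|||]; first by rewrite ev_fsub ev_conv_Lam.
all: move: (coprime_addn_gt0 cop0) (coprime_addn_gt0 cop'); lia.
Qed.

Theorem lemma8 (q p : nat) (hqp : coprime q p) :
  (forall u : point, F (q, p) u != 0 -> inJ (q, p) u) /\
  (forall c : point, extremal (q, p) c -> F (q, p) c = 1).
Proof. exact: Fl_J_shaped hqp (leqnn _). Qed.
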